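(* Let $\otimes$ be a uninorm on $[0,1]$ and $\neg$ a strong negation function. Then $(\otimes,\Phi^{\neg}(\otimes))$ satisfies the rearrangement inequality if and only if $(\otimes,\Phi^{\neg}(\otimes))$ satisfies the dual rearrangement inequality.
   Context: A uninorm is a function $\otimes:[0,1]^2\to[0,1]$ that is commutative, associative, monotonic (for all $x,y,z\in[0,1]$, $x\leq y$ implies $x\otimes z\leq y\otimes z$), and has an identity element $e\in[0,1]$ ($x\otimes e=x$ for all $x$). A negation is a monotonically nonincreasing function $\neg:[0,1]\to[0,1]$ with $\neg(0)=1$, $\neg(1)=0$; it is strong if it is strictly monotone and involutive. For $f:[0,1]^2\to[0,1]$, $\Phi^{\neg}(f)(x,y)=\neg(f(\neg x,\neg y))$. For uninorms $\otimes,\oplus$, the pair $(\otimes,\oplus)$ satisfies the rearrangement inequality if for every $n\geq1$, all $0\leq x_1\leq\cdots\leq x_n\leq 1$, $0\leq y_1\leq\cdots\leq y_n\leq 1$ and every permutation $\sigma$ of $\{1,\dots,n\}$, $$(x_n\otimes y_1)\oplus\cdots\oplus(x_1\otimes y_n)\leq (x_{\sigma(1)}\otimes y_1)\oplus\cdots\oplus(x_{\sigma(n)}\otimes y_n)\leq (x_1\otimes y_1)\oplus\cdots\oplus(x_n\otimes y_n),$$ and satisfies the dual rearrangement inequality if for all such data $$(x_n\oplus y_1)\otimes\cdots\otimes(x_1\oplus y_n)\geq (x_{\sigma(1)}\oplus y_1)\otimes\cdots\otimes(x_{\sigma(n)}\oplus y_n)\geq (x_1\oplus y_1)\otimes\cdots\otimes(x_n\oplus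 y_n).$$ *)

From HB Require Import structures.
From mathcomp Require Import all_boot all_order all_algebra all_fingroup.
From mathcomp Require Import reals.
Set Implicit Arguments. Unset Strict Implicit. Unset Printing Implicit Defensive.
Import Order.TTheory GRing.Theory Num.Theory.
Local Open Scope ring_scope.

Section Defs.
Variable R : realType.

Definition in01 (x : R) : Prop := 0 <= x <= 1.

(* A uninorm on [0,1]; binary functions are represented as R -> R -> R,
   with all axioms imposed on [0,1] (values outside are irrelevant). *)
Definition uninorm (U : R -> R -> R) : Prop :=
  [/\ (forall x y, in01 x -> in01 y -> in01 (U x y)),
      (forall x y, in01 x -> in01 y -> U x y = U y x),
      (forall x y z, in01 x -> in01 y -> in01 z -> U x (U y z) = U (U x y) z),
      (forall x y z, in01 x -> in01 y -> in01 z -> x <= y -> U x z <= U y z)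
    & exists2 e, in01 e & forall x, in01 x -> U x e = x].

Definition negation (N : R -> R) : Prop :=
  [/\ (forall x, in01 x -> in01 (N x)),
      (forall x y, in01 x -> in01 y -> x <= y -> N y <= N x),
      N 0 = 1 & N 1 = 0].

Definition strong_negation (N : R -> R) : Prop :=
  [/\ negation N,
      (forall x y, in01 x -> in01 y -> x < y -> N y < N x)
    & (forall x, in01 x -> N (N x) = x)].

Definition Phi (N : R -> R) (f : R -> R -> R) : R -> R -> R :=
  fun x y => N (f (N x) (N y)).

Definition opfold (op : R -> R -> R) (s : seq R) : R :=
  if s is a :: t then foldl op a t else 0.

Definition opbig (op : R -> R -> R) (n : nat) (a : 'I_n -> R) : R :=
  opfold op [seq a i | i <- enum 'I_n].

Definition nondecr (n : nat) (x : 'I_n -> R) : Prop :=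
  forall i j : 'I_n, (i <= j)%N -> x i <= x j.

Definition rearrangement (T S : R -> R -> R) : Prop :=
  forall (n : nat) (x y : 'I_n -> R) (sigma : 'S_n), (1 <= n)%N ->
    (forall i, in01 (x i)) -> (forall i, in01 (y i)) ->
    nondecr x -> nondecr y ->
    opbig S (fun i => T (x (rev_ord i)) (y i))
      <= opbig S (fun i => T (x (sigma i)) (y i))
    /\ opbig S (fun i => T (x (sigma i)) (y i))
      <= opbig S (fun i => T (x i) (y i)).

Definition dual_rearrangement (T S : R -> R -> R) : Prop :=
  forall (n : nat) (x y : 'I_n -> R) (sigma : 'S_n), (1 <= n)%N ->
    (forall i, in01 (x i)) -> (forall i, in01 (y i)) ->
    nondecr x -> nondecr y ->
    opbig T (fun i => S (x (rev_ord i)) (y i))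
      >= opbig T (fun i => S (x (sigma i)) (y i))
    /\ opbig T (fun i => S (x (sigma i)) (y i))
      >= opbig T (fun i => S (x i) (y i)).

End Defs.

From mathcomp Require Import all_boot all_order all_algebra all_fingroup.
From mathcomp Require Import reals.
Set Implicit Arguments. Unset Strict Implicit. Unset Printing Implicit Defensive.
Local Open Scope ring_scope.

(* A strong negation N is an order-reversing involution of [0,1] which
   exchanges U and its dual S = Phi N U: N (U a b) = S (N a) (N b) and
   N (S a b) = U (N a) (N b).  Given nondecreasing data x, y and a permutation
   sigma, the data x'_i = N x_(n+1-i), y'_i = N y_(n+1-i) are again
   nondecreasing, and applying N to an S-fold of the terms U x'_(sigma' i) y'_i,
   with sigma' the conjugate of sigma by the reversal of indices, gives the
   U-fold of the terms S x_(sigma i) y_i, up to reading the fold backwards,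
   which commutativity and associativity allow.  As N reverses inequalities,
   each chain of the rearrangement inequality for (x', y', sigma') becomes the
   dual chain for (x, y, sigma), and symmetrically. *)

Lemma map_rev_ord_enum n : map (@rev_ord n) (enum 'I_n) = rev (enum 'I_n).
Proof.
apply: (inj_map val_inj); rewrite map_rev -map_comp val_enum_ord.
apply: (@eq_from_nth _ 0%N) => [|i];
  rewrite size_map ?size_rev size_enum_ord ?size_iota // => lt_in.
rewrite nth_rev ?size_iota // (nth_map (Ordinal lt_in)) ?size_enum_ord //=.
by rewrite nth_enum_ord // nth_iota // (rev_ord_proof (Ordinal lt_in)).
Qed.

Lemma in_cons_inv (T : eqType) (P : T -> Prop) a s :
  {in a :: s, forall z, P z} -> P a /\ {in s, forall z, P z}.
Proof. by move=> Ps; split=> [|z zs]; apply: Ps; rewrite inE ?eqxx ?zs ?orbT. Qed.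

Section Fold.
Variables (R : realType) (op : R -> R -> R).

Lemma opfold_rcons s a : (0 < size s)%N -> opfold op (rcons s a) = op (opfold op s) a.
Proof. by case: s => [//|b s] _; rewrite rcons_cons /= foldl_rcons. Qed.

Lemma eq_opbig n (f g : 'I_n -> R) : f =1 g -> opbig op f = opbig op g.
Proof. by move=> fg; rewrite /opbig (eq_map fg). Qed.

Hypothesis opcl : forall a b, in01 a -> in01 b -> in01 (op a b).

Lemma foldl_in01 a s : in01 a -> {in s, forall z, in01 z} -> in01 (foldl op a s).
Proof.
elim: s a => [//|b s IH] a a01 /in_cons_inv [b01 s01] /=.
by apply: IH => //; apply: opcl.
Qed.

Lemma opfold_in01 s : (0 < size s)%N -> {in s, forall z, in01 z} -> in01 (opfold op s).
Proof. by case: s => [//|a s] _ /in_cons_inv [a01 s01]; apply: foldl_in01. Qed.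

Lemma opbig_in01 n (f : 'I_n -> R) :
  (0 < n)%N -> (forall i, in01 (f i)) -> in01 (opbig op f).
Proof.
move=> n_gt0 f01; apply: opfold_in01; first by rewrite size_map size_enum_ord.
by move=> _ /mapP[i _ ->].
Qed.

Hypothesis opC : forall a b, in01 a -> in01 b -> op a b = op b a.
Hypothesis opA : forall a b c, in01 a -> in01 b -> in01 c ->
  op a (op b c) = op (op a b) c.

Lemma foldl_op_head a b s : in01 a -> in01 b -> {in s, forall z, in01 z} ->
  foldl op (op a b) s = op a (foldl op b s).
Proof.
elim: s b => [//|c s IH] b a01 b01 /in_cons_inv [c01 s01] /=.
by rewrite -opA // IH //; apply: opcl.
Qed.

Lemma opfold_rev s : {in s, forall z, in01 z} -> opfold op (rev s) = opfold op s.
Proof.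
case: s => [//|a s]; elim: s a => [//|b s IH] a /in_cons_inv [a01 bs01].
have [b01 s01] := in_cons_inv bs01.
rewrite rev_cons opfold_rcons ?size_rev // IH //= opC ?foldl_op_head //.
exact: foldl_in01.
Qed.

Lemma opbig_rev n (f : 'I_n -> R) :
  (forall i, in01 (f i)) -> opbig op (fun i => f (rev_ord i)) = opbig op f.
Proof.
move=> f01; rewrite /opbig (map_comp f) map_rev_ord_enum map_rev opfold_rev //.
by move=> _ /mapP[i _ ->].
Qed.
End Fold.

Section Morphism.
Variables (R : realType) (A B : R -> R -> R) (N : R -> R).
Hypothesis Acl : forall a b, in01 a -> in01 b -> in01 (A a b).
Hypothesis NA : forall a b, in01 a -> in01 b -> N (A a b) = B (N a) (N b).

Lemma foldl_morph a s : in01 a -> {in s, forall z, in01 z} ->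
  N (foldl A a s) = foldl B (N a) (map N s).
Proof.
elim: s a => [//|b s IH] a a01 /in_cons_inv [b01 s01] /=.
by rewrite IH ?NA //; apply: Acl.
Qed.

Lemma opbig_morph n (f : 'I_n -> R) : (0 < n)%N -> (forall i, in01 (f i)) ->
  N (opbig A f) = opbig B (fun i => N (f i)).
Proof.
move=> n_gt0 f01; rewrite /opbig (map_comp N f).
have : {in map f (enum 'I_n), forall z, in01 z} by move=> _ /mapP[i _ ->].
have : (0 < size (map f (enum 'I_n)))%N by rewrite size_map size_enum_ord.
by case: (map f _) => [//|a s] _ /in_cons_inv [a01 s01]; apply: foldl_morph.
Qed.
End Morphism.

Definition comm_semigroup01 (R : realType) (op : R -> R -> R) : Prop :=
  [/\ forall a b, in01 a -> in01 b -> in01 (op a b),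
      forall a b, in01 a -> in01 b -> op a b = op b a
    & forall a b c, in01 a -> in01 b -> in01 c -> op a (op b c) = op (op a b) c].

Section Phi.
Variables (R : realType) (N : R -> R) (f : R -> R -> R).
Hypotheses (N01 : forall a, in01 a -> in01 (N a)) (NK : forall a, in01 a -> N (N a) = a).

Lemma Phi_neg a b : in01 a -> in01 b -> Phi N f (N a) (N b) = N (f a b).
Proof. by move=> a01 b01; rewrite /Phi !NK. Qed.

Hypothesis fcl : forall a b, in01 a -> in01 b -> in01 (f a b).

Lemma neg_Phi a b : in01 a -> in01 b -> N (Phi N f a b) = f (N a) (N b).
Proof. by move=> a01 b01; rewrite /Phi NK //; apply: fcl; apply: N01. Qed.

Lemma Phi_comm_semigroup01 : comm_semigroup01 f -> comm_semigroup01 (Phi N f).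
Proof.
case=> _ fC fA; split=> [a b a01 b01 | a b a01 b01 | a b c a01 b01 c01].
- by apply/N01/fcl; apply: N01.
- by rewrite /Phi fC //; apply: N01.
- by rewrite /Phi !NK ?fA //; do ?[apply: fcl | apply: N01].
Qed.
End Phi.

Definition rearranged (R : realType) (outer inner : R -> R -> R) (r : rel R) :=
  forall (n : nat) (x y : 'I_n -> R) (sigma : 'S_n), (1 <= n)%N ->
    (forall i, in01 (x i)) -> (forall i, in01 (y i)) ->
    nondecr x -> nondecr y ->
    r (opbig outer (fun i => inner (x (rev_ord i)) (y i)))
      (opbig outer (fun i => inner (x (sigma i)) (y i)))
    /\ r (opbig outer (fun i => inner (x (sigma i)) (y i)))
      (opbig outer (fun i => inner (x i) (y i))).

Lemma rearrangementE (R : realType) (T S : R -> R -> R) :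
  rearrangement T S = rearranged S T <=%R.
Proof. by []. Qed.

Lemma dual_rearrangementE (R : realType) (T S : R -> R -> R) :
  dual_rearrangement T S = rearranged T S >=%R.
Proof. by []. Qed.

Lemma rev_conj_inj n (sigma : 'S_n) :
  injective (fun i => rev_ord (sigma (rev_ord i))).
Proof. by move=> i j /rev_ord_inj/perm_inj/rev_ord_inj. Qed.

Definition rev_conj n (sigma : 'S_n) : 'S_n := perm (@rev_conj_inj n sigma).

Lemma rev_conjE n (sigma : 'S_n) i : rev_conj sigma i = rev_ord (sigma (rev_ord i)).
Proof. exact: permE. Qed.

Section Duality.
Variables (R : realType) (A B : R -> R -> R) (N : R -> R).
Hypotheses (acA : comm_semigroup01 A) (acB : comm_semigroup01 B).
Hypotheses (negN : negation N) (NK : forall a, in01 a -> N (N a) = a).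
Hypothesis NA : forall a b, in01 a -> in01 b -> N (A a b) = B (N a) (N b).
Hypothesis NB : forall a b, in01 a -> in01 b -> N (B a b) = A (N a) (N b).

Definition neg_rev n (x : 'I_n -> R) : 'I_n -> R := fun i => N (x (rev_ord i)).

Lemma neg_rev_in01 n (x : 'I_n -> R) :
  (forall i, in01 (x i)) -> forall i, in01 (neg_rev x i).
Proof. by case: negN => N01 _ _ _ x01 i; apply: N01. Qed.

Lemma neg_rev_nondecr n (x : 'I_n -> R) :
  (forall i, in01 (x i)) -> nondecr x -> nondecr (neg_rev x).
Proof.
case: negN => _ Nanti _ _ x01 xle i j le_ij; apply: Nanti => //.
by apply: xle; rewrite /= leq_sub2l.
Qed.

Lemma opbig_neg_rev n (f : 'I_n -> R) : (0 < n)%N -> (forall i, in01 (f i)) ->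
  opbig A f = N (opbig B (neg_rev f)).
Proof.
have [Acl _ _] := acA; have [Bcl BC BA] := acB; have [N01 _ _ _] := negN.
move=> n_gt0 f01; rewrite /neg_rev (opbig_rev Bcl BC BA (f := fun i => N (f i))).
- by rewrite -(opbig_morph Acl NA) // NK //; apply: opbig_in01.
- by move=> i; apply: N01.
Qed.

Lemma opbig_inner_neg_rev n (x y : 'I_n -> R) (tau tau' : 'I_n -> 'I_n) :
  (forall i, tau' i = rev_ord (tau (rev_ord i))) -> (0 < n)%N ->
  (forall i, in01 (x i)) -> (forall i, in01 (y i)) ->
  opbig A (fun i => B (x (tau i)) (y i))
  = N (opbig B (fun i => A (neg_rev x (tau' i)) (neg_rev y i))).
Proof.
have [Bcl _ _] := acB; move=> tauE n_gt0 x01 y01.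
rewrite (opbig_neg_rev n_gt0) => [|i]; last exact: Bcl.
congr N; apply: eq_opbig => i.
by rewrite /neg_rev NB // tauE rev_ordK.
Qed.

Lemma rearranged_neg_rev (r r' : rel R) :
  (forall a b, in01 a -> in01 b -> r a b -> r' (N a) (N b)) ->
  rearranged B A r -> rearranged A B r'.
Proof.
have [Acl _ _] := acA; have [Bcl _ _] := acB.
move=> rN Hr n x y sigma n_gt0 x01 y01 xle yle.
have [x'01 y'01] := (neg_rev_in01 x01, neg_rev_in01 y01).
have [le1 le2] := Hr n _ _ (rev_conj sigma) n_gt0 x'01 y'01
  (neg_rev_nondecr x01 xle) (neg_rev_nondecr y01 yle).
rewrite (opbig_inner_neg_rev (rev_conjE sigma)) //.
rewrite (opbig_inner_neg_rev (tau := @rev_ord n)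
  (fun i => esym (rev_ordK (rev_ord i)))) //.
rewrite (opbig_inner_neg_rev (tau := id) (fun i => esym (rev_ordK i))) //.
by split; apply: rN => //; apply: opbig_in01 => // i; apply: Acl.
Qed.
End Duality.

Theorem corollary1 (R : realType) (U : R -> R -> R) (N : R -> R) :
  uninorm U -> strong_negation N ->
  (rearrangement U (Phi N U) <-> dual_rearrangement U (Phi N U)).
Proof.
move=> [Ucl UC UA _ _] [negN _ NK]; have [N01 Nanti _ _] := negN.
have acU : comm_semigroup01 U by split.
have acS := Phi_comm_semigroup01 N01 NK Ucl acU.
have NU a b : in01 a -> in01 b -> N (U a b) = Phi N U (N a) (N b).
  by move=> a01 b01; rewrite Phi_neg.
have NS := neg_Phi N01 NK Ucl.
rewrite rearrangementE dual_rearrangementE.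
by split; apply: (rearranged_neg_rev _ _ negN NK) => // a b *; apply: Nanti.
Qed.
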